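(* For every integer $n\ge4$ there exists a hyperbolic Triakis Truncated Tetrahedron $KP_{3,3}^n$ satisfying the angle condition $\alpha+2\beta+2\gamma=2\pi$.
   Context: A hyperbolic Triakis Truncated Tetrahedron $KP_{3,3}^n$ is obtained from a hyperbolic truncated tetrahedron $TP_{3,3}$ (all faces regular: four hexagons and four triangles, with full tetrahedral symmetry) by gluing to each triangular face a pyramid $PY_3^n$ whose base is congruent to that face; $PY_3^n$ is a generalized (possibly infinite) pyramid with regular triangular base and three possibly infinite triangular sides, invariant under rotation by $2\pi/3$ about the axis through the center of the base, with dihedral angle $2\pi/n$ between adjacent sides. In the angle condition, $\alpha$ is the dihedral angle between two hexagonal faces of $TP_{3,3}$, $\beta$ the dihedral angle between a triangular and a hexagonal face of $TP_{3,3}$, and $\gamma$ the dihedral angle between base and side of $PY_3^n$. *)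

From HB Require Import structures.
From mathcomp Require Import all_boot all_order all_algebra all_fingroup.
From mathcomp Require Import all_classical all_reals.
From mathcomp Require Import trigo exp.
Set Implicit Arguments.
Unset Strict Implicit.
Unset Printing Implicit Defensive.
Import Order.TTheory GRing.Theory Num.Theory.
Local Open Scope ring_scope.

(* Hyperboloid (Lorentz) model of hyperbolic 3-space in R^{3,1}.           *)
(* Vectors are row vectors 'rV[R]_4, coordinate 0 is the time coordinate.  *)
Section Hyp.
Variable R : realType.
Notation vec := 'rV[R]_4.

Definition lf (x y : vec) : R :=
  \sum_(i < 4) (if (i : nat) == 0%N then -1 else 1) * x 0 i * y 0 i.

Definition inH3 (x : vec) : Prop := lf x x = -1 /\ 0 < x 0 0.

(* hyperbolic distance: cosh d(x,y) = - <x,y>, i.e. d = arcosh(-<x,y>) *)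
Definition hdist (x y : vec) : R :=
  let t := - lf x y in ln (t + Num.sqrt (t ^+ 2 - 1)).

(* angle at vertex v (in H^3) between the geodesic segments [v,u] and [v,w]:
   angle between the tangent vectors u + <u,v> v and w + <w,v> v at v *)
Definition hangle (v u w : vec) : R :=
  let tu := u + lf u v *: v in
  let tw := w + lf w v *: v in
  acos (lf tu tw / Num.sqrt (lf tu tu * lf tw tw)).

(* isometries of H^3: linear maps of R^{3,1} (acting on row vectors) that
   preserve the Lorentz form and the upper sheet (the group O^+(3,1)) *)
Definition hisometry (A : 'M[R]_4) : Prop :=
  (forall x y : vec, lf (x *m A) (y *m A) = lf x y) /\
  (forall x : vec, inH3 x -> inH3 (x *m A)).

Definition unit_spacelike (n : vec) : Prop := lf n n = 1.

(* interior dihedral angle between two faces with outward unit normals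
   nF, nG (polyhedron on the side <x,nF> <= 0, <x,nG> <= 0) *)
Definition dihedral (nF nG : vec) : R := acos (- lf nF nG).

(* Combinatorics: the tetrahedron has vertices i : 'I_4; the truncated     *)
(* tetrahedron has 12 vertices v i j (i <> j), the vertex lying on the      *)
(* tetrahedron edge ij near i.  Triangle face i = {v i j | j <> i};         *)
(* hexagonal face k (opposite tetrahedron vertex k) = {v i j | i,j <> k}.   *)
(* Edges: triangle edges v i j -- v i l, hex-hex edges v i j -- v j i.      *)
(* nt i (resp. nh k) is the outward unit normal of triangle i (hexagon k). *)
Definition is_TP (v : 'I_4 -> 'I_4 -> vec) (nt nh : 'I_4 -> vec) : Prop :=
  (forall i j, i != j -> inH3 (v i j)) /\
  (forall i, unit_spacelike (nt i) /\
     forall i' j, i' != j ->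
       (i' == i -> lf (nt i) (v i' j) = 0) /\
       (i' != i -> lf (nt i) (v i' j) < 0)) /\
  (forall k, unit_spacelike (nh k) /\
     forall i j, i != j ->
       ((i != k) && (j != k) -> lf (nh k) (v i j) = 0) /\
       ((i == k) || (j == k) -> lf (nh k) (v i j) < 0)) /\
  (forall i, exists a, 0 < a /\ exists th,
     forall j l m, [&& i != j, i != l, i != m, j != l, j != m & l != m] ->
       hdist (v i j) (v i l) = a /\ hangle (v i j) (v i l) (v i m) = th) /\
  (* (2) the hexagonal faces are regular (equal sides, equal angles);
     the hexagon k is v i j, v j i, v j l, v l j, v l i, v i l
     where {i,j,l} = 'I_4 \ {k} *)
  (forall k, exists a, 0 < a /\ exists th,
     forall i j l, [&& i != j, i != l, j != l, i != k, j != k & l != k] ->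
       [/\ hdist (v i j) (v j i) = a, hdist (v i j) (v i l) = a
         & hangle (v i j) (v j i) (v i l) = th]) /\
  (forall s : {perm 'I_4}, exists A, hisometry A /\
     forall i j, i != j -> v i j *m A = v (s i) (s j)).

(* Base vertices b k (k : 'I_3), apex p given as a nonzero vector of       *)
(* R^{3,1}, i.e. a projective point that may be proper (timelike), ideal   *)
(* (lightlike) or hyperideal (spacelike) -- "possibly infinite" pyramid;   *)
(* its sign is normalized by <p, b k> < 0.  n0 is the outward unit normal  *)
(* of the base, m k that of the side through b (k+1), b (k+2) and p.       *)
Definition nxt (k : 'I_3) : 'I_3 := ordS k.

Definition is_PY (n : nat) (b : 'I_3 -> vec) (p : vec) (n0 : vec)
    (m : 'I_3 -> vec) : Prop :=
  (forall k, inH3 (b k) /\ lf p (b k) < 0) /\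
  (exists a, 0 < a /\ exists th, forall k,
     hdist (b k) (b (nxt k)) = a /\ hangle (b k) (b (nxt k)) (b (nxt (nxt k))) = th) /\
  unit_spacelike n0 /\ (forall k, lf n0 (b k) = 0) /\ lf n0 p < 0 /\
  (forall k, [/\ unit_spacelike (m k), lf (m k) (b (nxt k)) = 0,
                lf (m k) (b (nxt (nxt k))) = 0, lf (m k) p = 0
              & lf (m k) (b k) < 0]) /\
  (exists A, hisometry A /\ p *m A = p /\ forall k, b k *m A = b (nxt k)) /\
  (forall k l, k != l -> dihedral (m k) (m l) = 2 * pi / n%:R).

(* Triakis truncated tetrahedron KP_{3,3}^n: a TP_{3,3} together with a     *)
(* PY_3^n whose base is congruent to each triangular face (a congruent copy *)
(* of the pyramid is glued on every triangular face).                       *)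
Definition base_congruent (b : 'I_3 -> vec) (v : 'I_4 -> 'I_4 -> vec)
    (i : 'I_4) : Prop :=
  exists A, hisometry A /\ exists f : 'I_3 -> 'I_4,
    injective f /\ (forall k, f k != i) /\ forall k, b k *m A = v i (f k).

Definition is_KP (n : nat) (v : 'I_4 -> 'I_4 -> vec) (nt nh : 'I_4 -> vec)
    (b : 'I_3 -> vec) (p n0 : vec) (m : 'I_3 -> vec) : Prop :=
  is_TP v nt nh /\ is_PY n b p n0 m /\ forall i, base_congruent b v i.

(* the angle condition alpha + 2 beta + 2 gamma = 2 pi, where alpha is the
   dihedral angle between two hexagonal faces of TP, beta the one between a
   triangular and a hexagonal face of TP, gamma the one between base and
   side of PY (each is the same along all such edges) *)
Definition angle_condition (nt nh : 'I_4 -> vec) (n0 : vec)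
    (m : 'I_3 -> vec) : Prop :=
  exists alpha beta gamma : R,
    (forall k l, k != l -> dihedral (nh k) (nh l) = alpha) /\
    (forall i k, i != k -> dihedral (nt i) (nh k) = beta) /\
    (forall k, dihedral n0 (m k) = gamma) /\
    alpha + 2 * beta + 2 * gamma = 2 * pi.

End Hyp.

(* In the coordinates given by the involution [tetra_mx] the Lorentz form becomes
   Q(x, y) = sum_k x_k y_k - (sum_k x_k) (sum_k y_k) / 2, which is invariant under
   permutations of the four coordinates, so conjugated permutation matrices are
   isometries of H^3 realising the full tetrahedral symmetry. For b, g > 0 with
   4 g^2 + 6 b g = 1 + b^2 / 2 the twelve points 2 b e_i + b e_j + g (e_0 + ... + e_3)
   lie on H^3 and, with explicit face normals, form a truncated tetrahedron with
   regular faces; writing q = b^2, its dihedral angles are given by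
   cos alpha = (5 q + 1) / (6 q + 3) and cos beta = (q - 1) / sqrt ((3 + 2 q) (3 + 6 q)).
   The angle condition forces gamma = pi - alpha / 2 - beta, and the half-angle
   formulas give cos gamma = sqrt ((11 q + 4) / (2 (2 q + 1)^2 (3 + 2 q))). On the
   triangle at vertex 0 we erect the pyramid whose sides meet the base at angle gamma;
   two of its sides then meet at an angle of cosine (8 q^2 - 1) / (2 (2 q + 1)^2).
   As q ranges over (0, +oo) this takes every value in (-1/2, 1), in particular
   cos (2 pi / n) for n >= 4, and that choice of q finishes the construction. *)

From HB Require Import structures.
From mathcomp Require Import all_boot all_order all_algebra all_fingroup.
From mathcomp Require Import all_classical all_reals.
From mathcomp Require Import trigo exp.
From mathcomp Require Import ring lra.
Set Implicit Arguments.
Unset Strict Implicit.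
Unset Printing Implicit Defensive.
Import Order.TTheory GRing.Theory Num.Theory.
Local Open Scope ring_scope.

Section LorentzForm.
Variable R : realType.
Notation vec := 'rV[R]_4.
Implicit Types (x y z : vec) (a : R).

Lemma lfC x y : lf x y = lf y x.
Proof. by apply: eq_bigr => i _; rewrite -!mulrA [y 0 i * _]mulrC. Qed.

Lemma lfDl x y z : lf (x + y) z = lf x z + lf y z.
Proof. by rewrite /lf -big_split; apply: eq_bigr => i _; rewrite /= !mxE; ring. Qed.

Lemma lfZl a x y : lf (a *: x) y = a * lf x y.
Proof. by rewrite /lf mulr_sumr; apply: eq_bigr => i _; rewrite !mxE; ring. Qed.

Lemma lfDr x y z : lf x (y + z) = lf x y + lf x z.
Proof. by rewrite lfC lfDl !(lfC x). Qed.

Lemma lfZr a x y : lf x (a *: y) = a * lf x y.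
Proof. by rewrite lfC lfZl lfC. Qed.

Lemma lfNl x y : lf (- x) y = - lf x y.
Proof. by rewrite -scaleN1r lfZl mulN1r. Qed.

Lemma lfNr x y : lf x (- y) = - lf x y.
Proof. by rewrite lfC lfNl lfC. Qed.

Lemma lf_combl a c x y z : lf (a *: x + c *: y) z = a * lf x z + c * lf y z.
Proof. by rewrite lfDl !lfZl. Qed.

Lemma lf_combr a c x y z : lf z (a *: x + c *: y) = a * lf z x + c * lf z y.
Proof. by rewrite lfDr !lfZr. Qed.

Definition unitize x : vec := (Num.sqrt (lf x x))^-1 *: x.

Lemma lf_unitizel x y : lf (unitize x) y = lf x y / Num.sqrt (lf x x).
Proof. by rewrite lfZl mulrC. Qed.

Lemma lf_unitize x y : 0 <= lf x x ->
  lf (unitize x) (unitize y) = lf x y / Num.sqrt (lf x x * lf y y).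
Proof.
by move=> x_ge0; rewrite lf_unitizel lfC lf_unitizel lfC sqrtrM // invfM; ring.
Qed.

Lemma lf_unitize_self x y :
  0 < lf x x -> lf y y = lf x x -> lf (unitize x) (unitize y) = lf x y / lf x x.
Proof. by move=> x_gt0 yx; rewrite lf_unitize ?ltW // yx -expr2 sqrtr_sqr gtr0_norm. Qed.

Lemma unit_spacelike_unitize x : 0 < lf x x -> unit_spacelike (unitize x).
Proof.
move=> x_gt0; rewrite /unit_spacelike lf_unitize ?ltW // -expr2 sqrtr_sqr.
by rewrite gtr0_norm // divff // gt_eqF.
Qed.

Definition arcosh (t : R) : R := ln (t + Num.sqrt (t ^+ 2 - 1)).

Lemma hdistE x y : hdist x y = arcosh (- lf x y).
Proof. by []. Qed.

Lemma arcosh_gt0 (t : R) : 1 < t -> 0 < arcosh t.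
Proof. by move=> t_gt1; apply: ln_gt0; have := sqrtr_ge0 (t ^+ 2 - 1); lra. Qed.

Lemma hangle_H3 u v w : lf u u = -1 -> lf v v = -1 -> lf w w = -1 ->
  hangle v u w = @acos R ((lf u w + lf u v * lf w v) /
                       Num.sqrt ((lf u v ^+ 2 - 1) * (lf w v ^+ 2 - 1))).
Proof.
move=> uu vv ww; rewrite /hangle !lfDl !lfDr !lfZl !lfZr (lfC v u) (lfC v w).
by rewrite uu vv ww; congr (acos (_ / Num.sqrt (_ * _))); ring.
Qed.

End LorentzForm.

Section TetrahedralCoordinates.
Variable R : realType.
Notation vec := 'rV[R]_4.
Implicit Types (x y : vec) (s : {perm 'I_4}).

Definition tetra_mx : 'M[R]_4 := \matrix_(i, j)
  (if ((i : nat) == 0%N) || ((j : nat) == 0%N) || (i == j) then 2^-1 else - 2^-1).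

Definition tform x y : R :=
  \sum_(k < 4) x 0 k * y 0 k - 2^-1 * (\sum_(k < 4) x 0 k) * (\sum_(k < 4) y 0 k).

Lemma lf_tetra x y : lf (x *m tetra_mx) (y *m tetra_mx) = tform x y.
Proof.
rewrite /lf /tform !big_ord_recr !big_ord0 /= !mxE /= !big_ord_recr !big_ord0 /= !mxE /=.
by field.
Qed.

Lemma tetra_mxK : tetra_mx *m tetra_mx = 1%:M.
Proof.
apply/matrixP => i j; rewrite !mxE !big_ord_recr !big_ord0 /= !mxE.
by case: i => [[|[|[|[|i]]]] ?] //; case: j => [[|[|[|[|j]]]] ?] //=; field.
Qed.

Lemma tetra_time x : (x *m tetra_mx) 0 0 = 2^-1 * \sum_(k < 4) x 0 k.
Proof. by rewrite !mxE !big_ord_recr !big_ord0 /= !mxE /=; field. Qed.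

Lemma perm_mx_coord x s k : (x *m perm_mx s) 0 k = x 0 (s^-1%g k).
Proof. by have := col_permE s^-1%g x; rewrite invgK => <-; rewrite mxE. Qed.

Lemma sum_perm_coord x s : \sum_(k < 4) (x *m perm_mx s) 0 k = \sum_(k < 4) x 0 k.
Proof.
rewrite [RHS](reindex_inj (@perm_inj _ s^-1%g)).
by apply: eq_bigr => k _; rewrite perm_mx_coord.
Qed.

Lemma tform_perm x y s : tform (x *m perm_mx s) (y *m perm_mx s) = tform x y.
Proof.
rewrite /tform !sum_perm_coord (reindex_inj (@perm_inj _ s)) /=.
by congr (_ - _); apply: eq_bigr => k _; rewrite !perm_mx_coord permK.
Qed.

Definition perm_iso s : 'M[R]_4 := tetra_mx *m perm_mx s *m tetra_mx.

Lemma perm_isoE x s : x *m tetra_mx *m perm_iso s = x *m perm_mx s *m tetra_mx.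
Proof. by rewrite /perm_iso !mulmxA -(mulmxA x) tetra_mxK mulmx1. Qed.

Lemma hisometry_perm_iso s : hisometry (perm_iso s).
Proof.
have tetraK x : x *m tetra_mx *m tetra_mx = x by rewrite -mulmxA tetra_mxK mulmx1.
have lf_perm_iso x y : lf (x *m perm_iso s) (y *m perm_iso s) = lf x y.
  by rewrite -(tetraK x) -(tetraK y) !perm_isoE !lf_tetra tform_perm.
split=> // x [x_H3 x_time]; split; first by rewrite lf_perm_iso.
by rewrite -(tetraK x) perm_isoE !tetra_time sum_perm_coord -tetra_time tetraK.
Qed.

Definition tvec (a : R) (i : 'I_4) (c : R) (j : 'I_4) (d : R) : vec :=
  \row_k (a * (k == i)%:R + c * (k == j)%:R + d).

Lemma tvec_perm a i c j d s : tvec a i c j d *m perm_mx s = tvec a (s i) c (s j) d.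
Proof.
apply/rowP => k; rewrite perm_mx_coord !mxE.
have inv_eq l : (s^-1%g k == l) = (k == s l).
  by rewrite -(inj_eq (@perm_inj _ s)) permKV.
by rewrite !inv_eq.
Qed.

Lemma sum_delta (i : 'I_4) : \sum_(k < 4) (k == i)%:R = 1 :> R.
Proof. by rewrite (bigD1 i) //= eqxx big1 ?addr0 // => k /negPf ->. Qed.

Lemma sum_delta2 (i i' : 'I_4) :
  \sum_(k < 4) ((k == i)%:R * (k == i')%:R) = (i == i')%:R :> R.
Proof. by rewrite (bigD1 i) //= eqxx mul1r big1 ?addr0 // => k /negPf ->; rewrite mul0r. Qed.

Lemma sum_tvec a i c j d : \sum_(k < 4) tvec a i c j d 0 k = a + c + 4 * d.
Proof.
under eq_bigr do rewrite mxE.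
by rewrite !big_split /= -!mulr_sumr !sum_delta sumr_const card_ord; ring.
Qed.

Lemma lf_tvec a i c j d a' i' c' j' d' :
  lf (tvec a i c j d *m tetra_mx) (tvec a' i' c' j' d' *m tetra_mx) =
  a * a' * (i == i')%:R + a * c' * (i == j')%:R + c * a' * (j == i')%:R
  + c * c' * (j == j')%:R + (a + c) * d' + d * (a' + c') + 4 * d * d'
  - 2^-1 * (a + c + 4 * d) * (a' + c' + 4 * d').
Proof.
rewrite lf_tetra /tform !sum_tvec.
have -> : \sum_(k < 4) tvec a i c j d 0 k * tvec a' i' c' j' d' 0 k =
  \sum_(k < 4) (a * a' * ((k == i)%:R * (k == i')%:R)
   + a * c' * ((k == i)%:R * (k == j')%:R) + c * a' * ((k == j)%:R * (k == i')%:R)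
   + c * c' * ((k == j)%:R * (k == j')%:R) + a * d' * (k == i)%:R
   + c * d' * (k == j)%:R + d * a' * (k == i')%:R + d * c' * (k == j')%:R + d * d').
  by apply: eq_bigr => k _; rewrite !mxE; ring.
by rewrite !big_split /= -!mulr_sumr !sum_delta2 !sum_delta sumr_const card_ord; ring.
Qed.

End TetrahedralCoordinates.

Section GramMatrix.
Variable R : realType.
Notation vec := 'rV[R]_4.
Variables b g : R.
Hypothesis vertex_on_H3 : 4 * g ^+ 2 + 6 * b * g = 1 + b ^+ 2 / 2.
Local Notation q := (b ^+ 2).

(* Each Gram entry below is a polynomial identity modulo [vertex_on_H3]; lra only
   needs to be given the right multiples of that relation. *)
Let scaled_vertex_on_H3 (c : R) :
  c * (4 * g ^+ 2 + 6 * b * g) = c * (1 + b ^+ 2 / 2).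
Proof. by rewrite vertex_on_H3. Qed.

Definition vertex (i j : 'I_4) : vec := tvec (2 * b) i b j g *m tetra_mx R.

Definition face_scale : R := 3 * b + 4 * g.

Definition tri_dir (i : 'I_4) : vec := tvec face_scale i 0 i (b / 2 - g) *m tetra_mx R.

Definition hex_dir (k : 'I_4) : vec := tvec (- face_scale) k 0 k (g + 3 * b / 2) *m tetra_mx R.

(* the sum of the three vertices [vertex ord0 j], j != ord0 *)
Definition base_center : vec := tvec (5 * b) ord0 0 ord0 (b + 3 * g) *m tetra_mx R.

(* normal to the base edge opposite to [vertex ord0 j], within the base plane *)
Definition edge_dir (j : 'I_4) : vec :=
  tvec (b * (1 - q)) ord0 ((3 + 2 * q) * b) j (- (q * g) - (1 + q) * b) *m tetra_mx R.

Lemma lf_vertex i j k l : lf (vertex i j) (vertex k l) =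
  - 1 - 5 * q + 4 * q * (i == k)%:R + 2 * q * (i == l)%:R
  + 2 * q * (j == k)%:R + q * (j == l)%:R.
Proof. by rewrite lf_tvec; have := vertex_on_H3; lra. Qed.

Lemma lf_tri_vertex i k l :
  lf (tri_dir i) (vertex k l) = face_scale * b * (2 * (i == k)%:R + (i == l)%:R - 2).
Proof. by rewrite lf_tvec /face_scale; lra. Qed.

Lemma lf_hex_vertex k i j :
  lf (hex_dir k) (vertex i j) = - face_scale * b * (2 * (k == i)%:R + (k == j)%:R).
Proof. by rewrite lf_tvec /face_scale; have := vertex_on_H3; lra. Qed.

Lemma lf_tri_self i : lf (tri_dir i) (tri_dir i) = 3 + 2 * q.
Proof. by rewrite lf_tvec eqxx /= /face_scale; have := vertex_on_H3; lra. Qed.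

Lemma lf_hex_hex k l :
  lf (hex_dir k) (hex_dir l) = (4 + 11 * q) * (k == l)%:R - 1 - 5 * q.
Proof.
rewrite lf_tvec /face_scale.
by have := scaled_vertex_on_H3 (k == l)%:R; have := vertex_on_H3; lra.
Qed.

Lemma lf_hex_self k : lf (hex_dir k) (hex_dir k) = 3 + 6 * q.
Proof. by rewrite lf_hex_hex eqxx /=; ring. Qed.

Lemma lf_tri_hex i k :
  lf (tri_dir i) (hex_dir k) = - (4 + 11 * q) * (i == k)%:R + 1 - q.
Proof.
rewrite lf_tvec /face_scale.
by have := scaled_vertex_on_H3 (i == k)%:R; have := vertex_on_H3; lra.
Qed.

Lemma lf_tri_center : lf (tri_dir ord0) base_center = 0.
Proof. by rewrite lf_tvec eqxx /= /face_scale; have := vertex_on_H3; lra. Qed.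

Section Base.
Variables j l : 'I_4.
Hypotheses (j_neq0 : j != ord0) (l_neq0 : l != ord0).

Lemma lf_edge_vertex :
  lf (edge_dir j) (vertex ord0 l) = q * (2 * q + 3) * (j == l)%:R.
Proof.
rewrite lf_tvec eqxx ![ord0 == _]eq_sym (negPf j_neq0) (negPf l_neq0) /=.
by have := scaled_vertex_on_H3 q; lra.
Qed.

Lemma lf_edge_edge : lf (edge_dir j) (edge_dir l) =
  q * (2 * q + 3) * ((2 * q + 3) * (j == l)%:R - 1 - q).
Proof.
rewrite lf_tvec eqxx ![ord0 == _]eq_sym (negPf j_neq0) (negPf l_neq0) /=.
by have := scaled_vertex_on_H3 q; have := scaled_vertex_on_H3 (q * q); lra.
Qed.

Lemma lf_edge_tri : lf (edge_dir j) (tri_dir ord0) = 0.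
Proof.
rewrite lf_tvec eqxx (negPf j_neq0) /= /face_scale.
by have := scaled_vertex_on_H3 q; lra.
Qed.

Lemma lf_edge_center : lf (edge_dir j) base_center = q * (2 * q + 3).
Proof.
rewrite lf_tvec eqxx (negPf j_neq0) /=.
by have := scaled_vertex_on_H3 q; lra.
Qed.

Lemma lf_center_vertex : lf base_center (vertex ord0 l) = - 3 - 2 * q.
Proof.
rewrite lf_tvec eqxx [ord0 == _]eq_sym (negPf l_neq0) /=.
by have := vertex_on_H3; lra.
Qed.

End Base.

Lemma lf_edge_self j : j != ord0 ->
  lf (edge_dir j) (edge_dir j) = q * (2 * q + 3) * (q + 2).
Proof. by move=> j0; rewrite lf_edge_edge // eqxx /=; ring. Qed.

End GramMatrix.

Section HalfAngle.
Variable R : realType.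
Implicit Types x y : R.

Lemma sqrtr_eq x y : 0 <= y -> x = y ^+ 2 -> Num.sqrt x = y.
Proof. by move=> y_ge0 ->; rewrite sqrtr_sqr ger0_norm. Qed.

Lemma half_acos_bounds x : -1 <= x <= 1 -> 0 <= acos x / 2 <= pi / 2.
Proof. by move=> x_bnd; have := acos_ge0 x_bnd; have := acos_lepi x_bnd; lra. Qed.

Lemma cos_half_acos_sqr x : -1 <= x <= 1 -> cos (acos x / 2) ^+ 2 = (1 + x) / 2.
Proof.
move=> x_bnd; have := cos_mulr2n (acos x / 2).
rewrite {1}mulr2n -splitr acosK ?in_itv // => ex.
by rewrite [in RHS]ex mulr2n; field.
Qed.

Lemma cos_half_acos x : -1 <= x <= 1 -> cos (acos x / 2) = Num.sqrt ((1 + x) / 2).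
Proof.
move=> x_bnd; symmetry; apply: sqrtr_eq; last by rewrite cos_half_acos_sqr.
by apply: cos_ge0_pihalf; have := half_acos_bounds x_bnd; lra.
Qed.

Lemma sin_half_acos x : -1 <= x <= 1 -> sin (acos x / 2) = Num.sqrt ((1 - x) / 2).
Proof.
move=> x_bnd; symmetry; apply: sqrtr_eq.
  by apply: sin_ge0_pi; have := half_acos_bounds x_bnd; have := pi_gt0 R; lra.
by rewrite sin2cos2 cos_half_acos_sqr //; field.
Qed.

Lemma acos_oppr_cos x : 0 <= x <= pi -> acos (- cos x) = pi - x.
Proof.
move=> x_bnd; have -> : - cos x = cos (pi - x) by rewrite cosB cospi sinpi; ring.
by rewrite cosK // in_itv /=; lra.
Qed.

End HalfAngle.

Section AngleSum.
Variable R : realType.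
Implicit Types q : R.

Definition cos_alpha q : R := (5 * q + 1) / (6 * q + 3).
Definition cos_beta q : R := (q - 1) / Num.sqrt ((3 + 2 * q) * (3 + 6 * q)).
Definition cos_gamma q : R := Num.sqrt ((11 * q + 4) / (2 * (2 * q + 1) ^+ 2 * (3 + 2 * q))).

Variable q : R.
Hypothesis q_gt0 : 0 < q.

Lemma cos_alpha_bounds : -1 <= cos_alpha q <= 1.
Proof.
have q0 := q_gt0.
by apply/andP; split; rewrite /cos_alpha (ler_pdivlMr, ler_pdivrMr); lra.
Qed.

Local Notation r := (Num.sqrt (11 * q + 4)).
Local Notation t := (Num.sqrt (3 + 2 * q)).
Local Notation u := (Num.sqrt (3 + 6 * q)).
Local Notation v := (Num.sqrt (q + 2)).
Local Notation s2 := (Num.sqrt (2 : R)).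

Let sqrts_gt0 : [/\ 0 < r, 0 < t, 0 < u, 0 < v & 0 < s2].
Proof. by have := q_gt0; split; rewrite sqrtr_gt0; lra. Qed.

Lemma cos_betaE : cos_beta q = (q - 1) / (t * u).
Proof. by rewrite /cos_beta sqrtrM //; have := q_gt0; lra. Qed.

Lemma one_sub_cos_beta_sqr : 1 - cos_beta q ^+ 2 = (r * v / (t * u)) ^+ 2.
Proof.
have q0 := q_gt0.
rewrite cos_betaE !expr_div_n !exprMn !sqr_sqrtr; try lra.
by field; apply/andP; split; lra.
Qed.

Lemma cos_beta_bounds : -1 <= cos_beta q <= 1.
Proof. by have := sqr_ge0 (r * v / (t * u)); rewrite -one_sub_cos_beta_sqr; nra. Qed.

Lemma sin_acos_beta : sin (acos (cos_beta q)) = r * v / (t * u).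
Proof.
rewrite sin_acos ?cos_beta_bounds //; apply: sqrtr_eq; last exact: one_sub_cos_beta_sqr.
by apply: divr_ge0; apply: mulr_ge0; apply: sqrtr_ge0.
Qed.

Lemma cos_half_alpha : cos (acos (cos_alpha q) / 2) = r / (s2 * u).
Proof.
have q0 := q_gt0.
rewrite cos_half_acos ?cos_alpha_bounds //; apply: sqrtr_eq.
  by apply: divr_ge0; [|apply: mulr_ge0]; apply: sqrtr_ge0.
rewrite /cos_alpha expr_div_n exprMn !sqr_sqrtr; try lra.
by field; lra.
Qed.

Lemma sin_half_alpha : sin (acos (cos_alpha q) / 2) = v / (s2 * u).
Proof.
have q0 := q_gt0.
rewrite sin_half_acos ?cos_alpha_bounds //; apply: sqrtr_eq.
  by apply: divr_ge0; [|apply: mulr_ge0]; apply: sqrtr_ge0.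
rewrite /cos_alpha expr_div_n exprMn !sqr_sqrtr; try lra.
by field; lra.
Qed.

Lemma cos_gammaE : cos_gamma q = r / (s2 * (2 * q + 1) * t).
Proof.
have q0 := q_gt0.
apply: sqrtr_eq.
  by apply: divr_ge0; [|apply: mulr_ge0; [apply: mulr_ge0; [|lra]|]]; apply: sqrtr_ge0.
by rewrite expr_div_n !exprMn !sqr_sqrtr //; lra.
Qed.

Local Notation half_alpha := (acos (cos_alpha q) / 2).
Local Notation beta := (acos (cos_beta q)).

Lemma cos_half_alpha_add_beta : cos (half_alpha + beta) = - cos_gamma q.
Proof.
have [q0 [r0 t0 u0 v0 s20]] := (q_gt0, sqrts_gt0).
rewrite cosD cos_half_alpha sin_half_alpha acosK ?in_itv ?cos_beta_bounds //.
rewrite sin_acos_beta cos_betaE cos_gammaE.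
have -> : r / (s2 * u) * ((q - 1) / (t * u)) - v / (s2 * u) * (r * v / (t * u))
        = r / (s2 * t) * ((q - 1) - v ^+ 2) / u ^+ 2.
  by field; do ?(apply/andP; split); lra.
by rewrite !sqr_sqrtr; try lra; field; do ?(apply/andP; split); lra.
Qed.

Lemma sin_half_alpha_add_beta_gt0 : 0 < sin (half_alpha + beta).
Proof.
have [q0 [r0 t0 u0 v0 s20]] := (q_gt0, sqrts_gt0).
rewrite sinD cos_half_alpha sin_half_alpha acosK ?in_itv ?cos_beta_bounds //.
rewrite sin_acos_beta cos_betaE.
have -> : v / (s2 * u) * ((q - 1) / (t * u)) + r / (s2 * u) * (r * v / (t * u))
        = v / (s2 * t) * ((q - 1) + r ^+ 2) / u ^+ 2.
  by field; do ?(apply/andP; split); lra.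
rewrite !sqr_sqrtr; try lra.
by apply: divr_gt0; [apply: mulr_gt0; [apply: divr_gt0; [|apply: mulr_gt0]|]|]; lra.
Qed.

Lemma dihedral_angle_sum :
  acos (cos_alpha q) + 2 * acos (cos_beta q) + 2 * acos (cos_gamma q) = 2 * pi.
Proof.
have [alpha_bnd beta_bnd] := (cos_alpha_bounds, cos_beta_bounds).
have half_alpha_bnd := half_acos_bounds alpha_bnd.
have [beta_ge0 beta_le_pi] := (acos_ge0 beta_bnd, acos_lepi beta_bnd).
have sum_bnd : 0 <= half_alpha + beta <= pi.
  apply/andP; split; first lra.
  rewrite leNgt; apply/negP => pi_lt; have := sin_half_alpha_add_beta_gt0.
  rewrite -[half_alpha + beta](subrK pi) sinDpi oppr_gt0 ltNge => /negP; apply.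
  by apply: sin_ge0_pi; have := pi_gt0 R; lra.
by rewrite -[cos_gamma q]opprK -cos_half_alpha_add_beta acos_oppr_cos //; lra.
Qed.

End AngleSum.

Section ShapeParameters.
Variable R : realType.

Definition cos_side (q : R) : R := (8 * q ^+ 2 - 1) / (2 * (2 * q + 1) ^+ 2).

Lemma cos_side_onto (h : R) : 2^-1 < h < 1 ->
  exists2 q, 0 < q & cos_side q = 2 * h ^+ 2 - 1.
Proof.
move=> h_bnd; exists ((2 * h - 1) / (4 - 4 * h)); first by apply: divr_gt0; lra.
by rewrite /cos_side; field; rewrite ?expr2; do ?(apply/andP; split); nra.
Qed.

Lemma cos_pi_div_bounds (n : nat) : (4 <= n)%N -> (2^-1 : R) < cos (pi / n%:R : R) < 1.
Proof.
move=> n_ge4; have n4 : 4 <= n%:R :> R by rewrite ler_nat.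
have pi_gt0 := pi_gt0 R; set x := pi / n%:R.
have x_gt0 : 0 < x by rewrite divr_gt0 //; lra.
have x4_le_pi : x * 4 <= pi.
  by rewrite /x mulrAC ler_pdivrMr ?ler_pM2l //; lra.
have cos_ge0 : 0 <= cos x by apply: cos_ge0_pihalf; lra.
have cos2x_ge0 : 0 <= cos (x *+ 2) by apply: cos_ge0_pihalf; rewrite [x *+ 2]mulr2n; lra.
have cos_lt1 : cos x < 1.
  by rewrite -cos0 ltr_cos // !in_itv /=; lra.
rewrite cos_mulr2n [_ *+ 2]mulr2n in cos2x_ge0.
apply/andP; split => //; rewrite ltNge; apply/negP => c_le.
by have := ler_pM cos_ge0 cos_ge0 c_le c_le; rewrite -expr2; lra.
Qed.

Lemma exists_cos_side (n : nat) : (4 <= n)%N ->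
  exists2 q : R, 0 < q & acos (cos_side q) = 2 * pi / n%:R.
Proof.
move=> n_ge4; have n4 : 4 <= n%:R :> R by rewrite ler_nat.
have pi_gt0 := pi_gt0 R.
have [q q_gt0 side_eq] := cos_side_onto (cos_pi_div_bounds n_ge4).
have cos_double : cos (2 * pi / n%:R) = 2 * cos (pi / n%:R) ^+ 2 - 1 :> R.
  by rewrite -mulrA mulr_natl cos_mulr2n -mulr_natl.
exists q => //; rewrite side_eq -cos_double cosK // in_itv /=.
apply/andP; split; first by rewrite divr_ge0 //; lra.
by rewrite ler_pdivrMr; nra.
Qed.

Lemma vertex_params (q : R) : 0 < q -> exists b g : R,
  [/\ 0 < b, 0 < g, b ^+ 2 = q & 4 * g ^+ 2 + 6 * b * g = 1 + b ^+ 2 / 2].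
Proof.
move=> q_gt0; set b := Num.sqrt q; set r := Num.sqrt (44 * q + 16).
have [b_gt0 r_gt0] : 0 < b /\ 0 < r by rewrite !sqrtr_gt0; lra.
have [b2 r2] : b * b = q /\ r * r = 44 * q + 16 by rewrite -!expr2 !sqr_sqrtr //; lra.
exists b, ((r - 6 * b) / 8); rewrite !expr2 b2; split=> //; last lra.
by apply: divr_gt0; nra.
Qed.

End ShapeParameters.

Section TruncatedTetrahedron.
Variable R : realType.
Variables b g : R.
Hypotheses (b_gt0 : 0 < b) (g_gt0 : 0 < g).
Hypothesis vertex_on_H3 : 4 * g ^+ 2 + 6 * b * g = 1 + b ^+ 2 / 2.
Local Notation q := (b ^+ 2).
Local Notation vertex := (vertex b g).

Definition tri_normal i : 'rV[R]_4 := unitize (tri_dir b g i).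
Definition hex_normal k : 'rV[R]_4 := unitize (hex_dir b g k).

Let q_gt0 : 0 < q. Proof. exact: exprn_gt0. Qed.

Lemma lf_vertex_self i j : i != j -> lf (vertex i j) (vertex i j) = -1.
Proof.
by move=> ij; rewrite lf_vertex // !eqxx (negPf ij) eq_sym (negPf ij) /=; ring.
Qed.

Lemma vertex_H3 i j : i != j -> inH3 (vertex i j).
Proof.
move=> ij; split; first exact: lf_vertex_self.
by rewrite tetra_time sum_tvec; have := b_gt0; have := g_gt0; lra.
Qed.

Lemma lf_vertex_tri_edge i j l : i != j -> i != l -> j != l ->
  lf (vertex i j) (vertex i l) = - (1 + q).
Proof.
move=> ij il jl; rewrite lf_vertex // eqxx (negPf il) (negPf jl) eq_sym (negPf ij) /=.
by ring.
Qed.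

Lemma lf_vertex_hex_edge i j : i != j -> lf (vertex i j) (vertex j i) = - (1 + q).
Proof. by move=> ij; rewrite lf_vertex // !eqxx (negPf ij) eq_sym (negPf ij) /=; ring. Qed.

Lemma lf_vertex_hex_diagonal i j l : i != j -> i != l -> j != l ->
  lf (vertex j i) (vertex i l) = - 1 - 3 * q.
Proof.
move=> ij il jl; rewrite lf_vertex // eqxx (negPf il) (negPf jl) eq_sym (negPf ij) /=.
by ring.
Qed.

Lemma vertex_perm (s : {perm 'I_4}) i j :
  vertex i j *m perm_iso R s = vertex (s i) (s j).
Proof. by rewrite perm_isoE tvec_perm. Qed.

Lemma tri_normal_unit i : unit_spacelike (tri_normal i).
Proof. by apply: unit_spacelike_unitize; rewrite lf_tri_self //; have := q_gt0; lra. Qed.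

Lemma hex_normal_unit k : unit_spacelike (hex_normal k).
Proof. by apply: unit_spacelike_unitize; rewrite lf_hex_self //; have := q_gt0; lra. Qed.

Lemma lf_hex_normals k l : k != l -> lf (hex_normal k) (hex_normal l) = - cos_alpha q.
Proof.
move=> kl; have := q_gt0 => q0.
rewrite lf_unitize_self ?lf_hex_self //; last lra.
by rewrite lf_hex_hex // (negPf kl) /= /cos_alpha; field; lra.
Qed.

Lemma lf_tri_hex_normals i k : i != k -> lf (tri_normal i) (hex_normal k) = - cos_beta q.
Proof.
move=> ik; have := q_gt0 => q0.
rewrite lf_unitize ?lf_tri_self ?lf_hex_self ?lf_tri_hex // ?(negPf ik) /cos_beta; last lra.
by rewrite /=; ring.
Qed.

Let scale_gt0 (c : R) : 0 < c -> 0 < face_scale b g * b / Num.sqrt c.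
Proof.
move=> c_gt0; rewrite divr_gt0 ?sqrtr_gt0 // mulr_gt0 // /face_scale.
by have := b_gt0; have := g_gt0; lra.
Qed.

Lemma lf_tri_normal_vertex i k l :
  lf (tri_normal i) (vertex k l) =
  (2 * (i == k)%:R + (i == l)%:R - 2) * (face_scale b g * b / Num.sqrt (3 + 2 * q)).
Proof. by rewrite lf_unitizel lf_tri_vertex // lf_tri_self //; ring. Qed.

Lemma lf_hex_normal_vertex k i j :
  lf (hex_normal k) (vertex i j) =
  - ((2 * (k == i)%:R + (k == j)%:R) * (face_scale b g * b / Num.sqrt (3 + 6 * q))).
Proof. by rewrite lf_unitizel lf_hex_vertex // lf_hex_self //; ring. Qed.

Lemma tri_normal_vertex_on i l : i != l -> lf (tri_normal i) (vertex i l) = 0.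
Proof. by move=> il; rewrite lf_tri_normal_vertex eqxx (negPf il) /=; ring. Qed.

Lemma tri_normal_vertex_lt0 i k l : k != i -> lf (tri_normal i) (vertex k l) < 0.
Proof.
move=> ki; have coef_gt0 := @scale_gt0 (3 + 2 * q) ltac:(have := q_gt0; lra).
rewrite lf_tri_normal_vertex pmulr_llt0 // eq_sym (negPf ki) /=.
by case: (i == l) => /=; lra.
Qed.

Lemma hex_normal_vertex_on k i j :
  i != k -> j != k -> lf (hex_normal k) (vertex i j) = 0.
Proof.
move=> ik jk; rewrite lf_hex_normal_vertex ![k == _]eq_sym (negPf ik) (negPf jk) /=.
by ring.
Qed.

Lemma hex_normal_vertex_lt0 k i j :
  (i == k) || (j == k) -> lf (hex_normal k) (vertex i j) < 0.
Proof.
move=> ijk; have coef_gt0 := @scale_gt0 (3 + 6 * q) ltac:(have := q_gt0; lra).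
rewrite lf_hex_normal_vertex oppr_lt0 pmulr_lgt0 // ![k == _]eq_sym.
by case/orP: ijk => ->; case: (_ == k) => /=; lra.
Qed.

Lemma truncated_regular_triangles i : exists a, 0 < a /\ exists th,
  forall j l m, [&& i != j, i != l, i != m, j != l, j != m & l != m] ->
    hdist (vertex i j) (vertex i l) = a /\
    hangle (vertex i j) (vertex i l) (vertex i m) = th.
Proof.
exists (arcosh (1 + q)); split; first by apply: arcosh_gt0; have := q_gt0; lra.
pose e := - (1 + q); exists (acos ((e + e * e) / Num.sqrt ((e ^+ 2 - 1) * (e ^+ 2 - 1)))).
move=> j l m /and5P[ij il im jl /andP[jm lm]].
have [lj mj] : l != j /\ m != j by rewrite ![_ == j]eq_sym.
rewrite hdistE lf_vertex_tri_edge // opprK; split=> //.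
rewrite hangle_H3 ?lf_vertex_self //.
rewrite (lf_vertex_tri_edge il im lm) (lf_vertex_tri_edge il ij lj).
by rewrite (lf_vertex_tri_edge im ij mj).
Qed.

Lemma truncated_regular_hexagons k : exists a, 0 < a /\ exists th,
  forall i j l, [&& i != j, i != l, j != l, i != k, j != k & l != k] ->
    [/\ hdist (vertex i j) (vertex j i) = a, hdist (vertex i j) (vertex i l) = a
      & hangle (vertex i j) (vertex j i) (vertex i l) = th].
Proof.
exists (arcosh (1 + q)); split; first by apply: arcosh_gt0; have := q_gt0; lra.
pose e := - (1 + q).
exists (acos ((- 1 - 3 * q + e * e) / Num.sqrt ((e ^+ 2 - 1) * (e ^+ 2 - 1)))).
move=> i j l /and5P[ij il jl _ _]; have ji : j != i by rewrite eq_sym.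
rewrite !hdistE lf_vertex_hex_edge // lf_vertex_tri_edge // opprK; split=> //.
rewrite hangle_H3 ?lf_vertex_self //.
rewrite lf_vertex_hex_diagonal // lf_vertex_hex_edge //.
by rewrite (lf_vertex_tri_edge il ij) // eq_sym.
Qed.

Lemma truncated_tetrahedron : is_TP vertex tri_normal hex_normal.
Proof.
split; first exact: vertex_H3.
split.
  move=> i; split=> [|k l kl]; first exact: tri_normal_unit.
  by split=> [/eqP <-|]; [exact: tri_normal_vertex_on | exact: tri_normal_vertex_lt0].
split.
  move=> k; split=> [|i j _]; first exact: hex_normal_unit.
  by split=> [/andP[]|]; [exact: hex_normal_vertex_on | exact: hex_normal_vertex_lt0].
split; first exact: truncated_regular_triangles.
split; first exact: truncated_regular_hexagons.
move=> s; exists (perm_iso R s); split; first exact: hisometry_perm_iso.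
by move=> i j _; rewrite vertex_perm.
Qed.

End TruncatedTetrahedron.

Section Pyramid.
Variable R : realType.
Variables b g : R.
Hypothesis b_gt0 : 0 < b.
Hypothesis vertex_on_H3 : 4 * g ^+ 2 + 6 * b * g = 1 + b ^+ 2 / 2.
Local Notation q := (b ^+ 2).
Local Notation vertex := (vertex b g).
Local Notation base_normal := (tri_normal b g ord0).

Let q_gt0 : 0 < q. Proof. exact: exprn_gt0. Qed.

Definition edge_normal j : 'rV[R]_4 := unitize (edge_dir b g j).
Definition sin_gamma : R := Num.sqrt (1 - cos_gamma q ^+ 2).
Definition edge_offset : R := q * (2 * q + 3) / Num.sqrt (q * (2 * q + 3) * (q + 2)).

(* [side_normal j] is [edge_normal j] turned about the base edge opposite to
   [vertex ord0 j] until it makes the angle gamma with the base. The apex lies on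
   the axis spanned by [base_center] and [base_normal], at the height where all
   three side planes meet, since [lf (edge_normal j) base_center = edge_offset]. *)
Definition side_normal j : 'rV[R]_4 :=
  - (cos_gamma q *: base_normal + sin_gamma *: edge_normal j).
Definition apex : 'rV[R]_4 :=
  cos_gamma q *: base_center b g + (- (sin_gamma * edge_offset)) *: base_normal.

Lemma cos_gamma_bounds : 0 < cos_gamma q < 1.
Proof.
have q0 := q_gt0; have den_gt0 : 0 < 2 * (2 * q + 1) ^+ 2 * (3 + 2 * q).
  by rewrite !mulr_gt0 ?exprn_gt0 //; lra.
have arg_lt1 : (11 * q + 4) / (2 * (2 * q + 1) ^+ 2 * (3 + 2 * q)) < 1.
  by rewrite ltr_pdivrMr // mul1r expr2; nra.
rewrite /cos_gamma sqrtr_gt0 divr_gt0 //=; last lra.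
by rewrite -[X in _ < X]sqrtr1 ltr_sqrt.
Qed.

Lemma sin_gamma_gt0 : 0 < sin_gamma.
Proof. by rewrite sqrtr_gt0; have := cos_gamma_bounds; nra. Qed.

Lemma sin_gamma_sqr : sin_gamma ^+ 2 = 1 - cos_gamma q ^+ 2.
Proof. by rewrite sqr_sqrtr //; have := cos_gamma_bounds; nra. Qed.

Let edge_sqnorm_gt0 : 0 < q * (2 * q + 3) * (q + 2).
Proof. by have := q_gt0 => q0; rewrite !mulr_gt0 //; lra. Qed.

Lemma lf_edge_normals j l : j != ord0 -> l != ord0 ->
  lf (edge_normal j) (edge_normal l) = ((2 * q + 3) * (j == l)%:R - 1 - q) / (q + 2).
Proof.
move=> j0 l0; rewrite lf_unitize_self ?lf_edge_self // lf_edge_edge //.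
have [q0 b_neq0] := (q_gt0, lt0r_neq0 b_gt0).
by field; rewrite b_neq0 andbT; apply/andP; split; lra.
Qed.

Lemma lf_edge_normal_base j : j != ord0 -> lf (edge_normal j) base_normal = 0.
Proof. by move=> j0; rewrite lf_unitizel lfC lf_unitizel lfC lf_edge_tri // !mul0r. Qed.

Lemma lf_edge_normal_vertex j l : j != ord0 -> l != ord0 ->
  lf (edge_normal j) (vertex ord0 l) = (j == l)%:R * edge_offset.
Proof.
by move=> j0 l0; rewrite lf_unitizel lf_edge_vertex // lf_edge_self // /edge_offset; ring.
Qed.

Lemma lf_edge_normal_center j : j != ord0 ->
  lf (edge_normal j) (base_center b g) = edge_offset.
Proof.
by move=> j0; rewrite lf_unitizel lf_edge_center // lf_edge_self // /edge_offset; ring.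
Qed.

Lemma lf_base_normal_center : lf base_normal (base_center b g) = 0.
Proof. by rewrite lf_unitizel lf_tri_center // mul0r. Qed.

Lemma edge_normal_unit j : j != ord0 -> lf (edge_normal j) (edge_normal j) = 1.
Proof. by move=> j0; apply: unit_spacelike_unitize; rewrite lf_edge_self. Qed.

Lemma cos_gamma_sqr :
  cos_gamma q ^+ 2 = (11 * q + 4) / (2 * (2 * q + 1) ^+ 2 * (3 + 2 * q)).
Proof.
rewrite sqr_sqrtr // divr_ge0 // ?mulr_ge0 ?exprn_ge0 //; have := q_gt0; lra.
Qed.

Let base_normal_unit : lf base_normal base_normal = 1.
Proof. exact: tri_normal_unit. Qed.

Lemma side_normal_unit j : j != ord0 -> unit_spacelike (side_normal j).
Proof.
move=> j0; rewrite /unit_spacelike /side_normal lfNl lfNr opprK lf_combl !lf_combr.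
rewrite base_normal_unit edge_normal_unit // lf_edge_normal_base //.
rewrite lfC lf_edge_normal_base //.
by have := sin_gamma_sqr; rewrite !expr2; lra.
Qed.

Lemma lf_side_normals j l : j != ord0 -> l != ord0 -> j != l ->
  lf (side_normal j) (side_normal l) = - cos_side q.
Proof.
move=> j0 l0 jl; rewrite /side_normal lfNl lfNr opprK lf_combl !lf_combr.
rewrite base_normal_unit lf_edge_normals // (negPf jl) lf_edge_normal_base //.
rewrite lfC lf_edge_normal_base // /cos_side.
have -> : cos_gamma q * (cos_gamma q * 1 + sin_gamma * 0)
  + sin_gamma * (cos_gamma q * 0 + sin_gamma * (((2 * q + 3) * 0 - 1 - q) / (q + 2)))
  = cos_gamma q ^+ 2 - sin_gamma ^+ 2 * (1 + q) / (q + 2) by ring.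
rewrite sin_gamma_sqr cos_gamma_sqr; have := q_gt0 => q0.
by field; do ?(apply/andP; split); lra.
Qed.

Lemma edge_offset_gt0 : 0 < edge_offset.
Proof. by rewrite divr_gt0 ?sqrtr_gt0 // mulr_gt0 //; have := q_gt0; lra. Qed.

Lemma lf_base_side j : j != ord0 -> lf base_normal (side_normal j) = - cos_gamma q.
Proof.
move=> j0; rewrite /side_normal lfNr lf_combr base_normal_unit lfC lf_edge_normal_base //.
by ring.
Qed.

Lemma lf_side_vertex j l : j != ord0 -> l != ord0 ->
  lf (side_normal j) (vertex ord0 l) = - ((j == l)%:R * (sin_gamma * edge_offset)).
Proof.
move=> j0 l0; rewrite /side_normal lfNl lf_combl lf_edge_normal_vertex //.
by rewrite tri_normal_vertex_on 1?eq_sym //; ring.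
Qed.

Lemma lf_side_apex j : j != ord0 -> lf (side_normal j) apex = 0.
Proof.
move=> j0; rewrite /side_normal /apex lfNl lf_combl !lf_combr.
rewrite base_normal_unit lf_base_normal_center lf_edge_normal_center //.
by rewrite lf_edge_normal_base //; ring.
Qed.

Lemma lf_apex_vertex_lt0 l : l != ord0 -> lf apex (vertex ord0 l) < 0.
Proof.
move=> l0; rewrite /apex lf_combl lf_center_vertex // tri_normal_vertex_on 1?eq_sym //.
have := cos_gamma_bounds; have := q_gt0; nra.
Qed.

Lemma lf_base_apex_lt0 : lf base_normal apex < 0.
Proof.
rewrite /apex lf_combr base_normal_unit lf_base_normal_center.
by have := mulr_gt0 sin_gamma_gt0 edge_offset_gt0; lra.
Qed.

End Pyramid.

Lemma lift0_neq0 (k : 'I_3) : lift ord0 k != ord0 :> 'I_4.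
Proof. by rewrite eq_sym neq_lift. Qed.

Definition base_rotation : {perm 'I_4} := lift_perm ord0 ord0 (perm (@ordS_inj 3)).

Lemma base_rotation0 : base_rotation ord0 = ord0.
Proof. exact: lift_perm_id. Qed.

Lemma base_rotation_lift k : base_rotation (lift ord0 k) = lift ord0 (nxt k).
Proof. by rewrite lift_perm_lift permE. Qed.

Section Triakis.
Variable R : realType.
Variables b g : R.
Hypotheses (b_gt0 : 0 < b) (g_gt0 : 0 < g).
Hypothesis vertex_on_H3 : 4 * g ^+ 2 + 6 * b * g = 1 + b ^+ 2 / 2.
Local Notation q := (b ^+ 2).
Local Notation base_vertex := (fun k : 'I_3 => vertex b g ord0 (lift ord0 k)).
Local Notation side := (fun k : 'I_3 => side_normal b g (lift ord0 k)).

Lemma triangular_pyramid (n : nat) : acos (cos_side q) = 2 * pi / n%:R ->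
  is_PY n base_vertex (apex b g) (tri_normal b g ord0) side.
Proof.
move=> side_angle.
have lift_neq k : [/\ lift ord0 k != lift ord0 (nxt k),
    lift ord0 k != lift ord0 (nxt (nxt k))
  & lift ord0 (nxt k) != lift ord0 (nxt (nxt k))].
  by case: k => [[|[|[|]]] ?].
split=> [k|].
  split; first by apply: vertex_H3 => //; exact: neq_lift.
  by apply: lf_apex_vertex_lt0 => //; exact: lift0_neq0.
split.
  have [a [a_gt0 [th regular]]] := truncated_regular_triangles b_gt0 vertex_on_H3 ord0.
  exists a; split=> //; exists th => k; apply: regular.
  by have [n1 n2 n12] := lift_neq k; rewrite !neq_lift n1 n2 n12.
split; first exact: tri_normal_unit.
split; first by move=> k; apply: tri_normal_vertex_on => //; exact: neq_lift.
split; first exact: lf_base_apex_lt0.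
split.
  move=> k; have [n1 n2 _] := lift_neq k; split.
  - exact: side_normal_unit (lift0_neq0 k).
  - by rewrite lf_side_vertex ?lift0_neq0 // (negPf n1) /= mul0r oppr0.
  - by rewrite lf_side_vertex ?lift0_neq0 // (negPf n2) /= mul0r oppr0.
  - exact: lf_side_apex (lift0_neq0 k).
  - rewrite lf_side_vertex ?lift0_neq0 // eqxx mul1r oppr_lt0.
    exact: mulr_gt0 (sin_gamma_gt0 b_gt0) (edge_offset_gt0 b_gt0).
split.
  exists (perm_iso R base_rotation); split; first exact: hisometry_perm_iso.
  split; last by move=> k; rewrite vertex_perm base_rotation0 base_rotation_lift.
  have fixed0 a d : tvec a ord0 0 ord0 d *m tetra_mx R *m perm_iso R base_rotation
                    = tvec a ord0 0 ord0 d *m tetra_mx R.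
    by rewrite perm_isoE tvec_perm base_rotation0.
  by rewrite /apex mulmxDl -!scalemxAl !fixed0.
move=> k l kl; rewrite /dihedral lf_side_normals ?lift0_neq0 ?(inj_eq lift_inj) //.
by rewrite opprK side_angle.
Qed.

Lemma base_congruent_faces i : base_congruent base_vertex (vertex b g) i.
Proof.
exists (perm_iso R (tperm ord0 i)); split; first exact: hisometry_perm_iso.
exists (fun k => tperm ord0 i (lift ord0 k)); split; [|split].
- by move=> k l /perm_inj /lift_inj.
- by move=> k; rewrite -{2}(tpermL ord0 i) (inj_eq perm_inj) lift0_neq0.
- by move=> k; rewrite vertex_perm tpermL.
Qed.

Lemma triakis_angle_condition :
  angle_condition (tri_normal b g) (hex_normal b g) (tri_normal b g ord0) side.
Proof.
exists (acos (cos_alpha q)), (acos (cos_beta q)), (acos (cos_gamma q)).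
split; first by move=> k l kl; rewrite /dihedral lf_hex_normals // opprK.
split; first by move=> i k ik; rewrite /dihedral lf_tri_hex_normals // opprK.
split; first by move=> k; rewrite /dihedral lf_base_side ?lift0_neq0 // opprK.
by apply: dihedral_angle_sum; apply: exprn_gt0.
Qed.

End Triakis.

Unset Implicit Arguments.

Theorem mainTheorem14 (R : realType) (n : nat) (hn : (4 <= n)%N) :
  exists (v : 'I_4 -> 'I_4 -> 'rV[R]_4) (nt nh : 'I_4 -> 'rV[R]_4)
         (b : 'I_3 -> 'rV[R]_4) (p n0 : 'rV[R]_4) (m : 'I_3 -> 'rV[R]_4),
    is_KP n v nt nh b p n0 m /\ angle_condition nt nh n0 m.
Proof.
have [q q_gt0 side_angle] := exists_cos_side R hn.
have [b [g [b_gt0 g_gt0 b2 on_H3]]] := vertex_params q_gt0.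
rewrite -b2 in side_angle.
exists (vertex b g), (tri_normal b g), (hex_normal b g),
  (fun k => vertex b g ord0 (lift ord0 k)), (apex b g), (tri_normal b g ord0),
  (fun k => side_normal b g (lift ord0 k)).
split; last exact: triakis_angle_condition.
split; first exact: truncated_tetrahedron.
by split; [exact: triangular_pyramid | exact: base_congruent_faces].
Qed.
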